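(* Let $k\ge 1$ and $N=2^{k+1}$. There exist a finite field $\mathbb{F}_q$ of order $q\ge 2k+3$ and explicit constants $a_i,b_i\in\mathbb{F}_q$ with $a_i^2-b_i^2=-1$ for all $i\in\{1,\ldots,k\}$, such that the $(k+2,k)$ storage code with coding matrices $\mathbf{A}_i=a_i\mathbf{X}_i+b_i\mathbf{X}_{k+1}+\mathbf{I}_N$ ($i=1,\ldots,k$) is a repair optimal MDS storage code; that is: (1) (MDS) for every choice of $k$ of the $k+2$ nodes, the file $\mathbf{f}$ is uniquely determined by (computable from) the contents of those $k$ nodes; and (2) (optimal repair) for every single node (systematic or parity), the contents of that node can be exactly recovered from a total of $(k+1)\frac{N}{2}$ downloaded symbols, namely $\frac{N}{2}$ $\mathbb{F}_q$-linear combinations of the stored contents of each of the other $k+1$ nodes.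
   Context: All arithmetic is over a finite field $\mathbb{F}_q$; $-1$ denotes the field element $q-1$. A file $\mathbf{f}\in\mathbb{F}_q^{kN}$ is partitioned as $\mathbf{f}=[\mathbf{f}_1^T\ \cdots\ \mathbf{f}_k^T]^T$ with each $\mathbf{f}_i\in\mathbb{F}_q^N$. The $(k+2,k)$ storage code with $N\times N$ coding matrices $\mathbf{A}_1,\ldots,\mathbf{A}_k$ consists of $k+2$ nodes, each storing $N$ symbols: systematic node $i\in\{1,\ldots,k\}$ stores $\mathbf{f}_i$; the first parity node stores $\mathbf{f}_1+\cdots+\mathbf{f}_k$; the second parity node stores $\mathbf{A}_1^T\mathbf{f}_1+\cdots+\mathbf{A}_k^T\mathbf{f}_k$. For $i\in\{1,\ldots,k+1\}$, $\mathbf{X}_i=\mathbf{I}_{2^{i-1}}\otimes\mathrm{blkdiag}\big(\mathbf{I}_{N/2^i},-\mathbf{I}_{N/2^i}\big)$, an $N\times N$ diagonal matrix with entries $\pm1$; $\otimes$ is the Kronecker product and $\mathbf{I}_r$ the $r\times r$ identity. (The value $(k+1)\frac{N}{2}$ is the known information-theoretic minimum repair bandwidth for a single node of a $(k+2,k)$ MDS code storing $N$ symbols per node.) *)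

From HB Require Import structures.
From mathcomp Require Import all_boot all_order all_algebra all_field.
Set Implicit Arguments. Unset Strict Implicit. Unset Printing Implicit Defensive.
Import Order.TTheory GRing.Theory.
Local Open Scope ring_scope.

Definition Nlen (k : nat) : nat := 2 ^ k.+1.

(* X_i = I_{2^{i-1}} (x) blkdiag(I_{N/2^i}, -I_{N/2^i}), written entrywise:
   the j-th diagonal entry (0-based) is -1 iff floor(j / (N/2^i)) is odd. *)
Definition Xmat (F : fieldType) (k i : nat) : 'M[F]_(Nlen k) :=
  diag_mx (\row_(j < Nlen k)
             (if odd (j %/ (Nlen k %/ 2 ^ i)) then -1 else 1)).

(* Coding matrices A_i = a_i X_i + b_i X_{k+1} + I_N, for i = 1..k
   (index i : 'I_k stands for i+1). *)
Definition Acode (F : fieldType) (k : nat) (a b : 'I_k -> F) (i : 'I_k)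
  : 'M[F]_(Nlen k) :=
  a i *: Xmat F k i.+1 + b i *: Xmat F k k.+1 + 1%:M.

(* Content of node j of the (k+2,k) code with coding matrices A, storing the
   file f = [f_1; ...; f_k]: nodes 0..k-1 are systematic (node i stores f_i),
   node k is the first parity (sum f_i), node k+1 the second parity
   (sum A_i^T f_i). *)
Definition node_content (F : fieldType) (k n : nat) (A : 'I_k -> 'M[F]_n)
  (f : 'I_k -> 'cV[F]_n) (j : 'I_(k.+2)) : 'cV[F]_n :=
  match (insub (val j) : option 'I_k) with
  | Some i => f i
  | None => if val j == k then \sum_(i < k) f i
            else \sum_(i < k) (A i)^T *m f i
  end.

Definition is_MDS (F : fieldType) (k n : nat) (A : 'I_k -> 'M[F]_n) : Prop :=
  forall S : {set 'I_(k.+2)}, #|S| = k ->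
  forall f g : 'I_k -> 'cV[F]_n,
    (forall j, j \in S -> node_content A f j = node_content A g j) -> f = g.

Definition repairable_with (F : fieldType) (k n d : nat)
  (A : 'I_k -> 'M[F]_n) : Prop :=
  forall j : 'I_(k.+2),
  exists S : 'I_(k.+2) -> 'M[F]_(d, n),
  exists rec : ('I_(k.+2) -> 'cV[F]_d) -> 'cV[F]_n,
  forall f : 'I_k -> 'cV[F]_n,
    rec (fun l => if l == j then 0 else S l *m node_content A f l)
    = node_content A f j.

From HB Require Import structures.
From mathcomp Require Import all_boot all_order all_algebra all_field.
From mathcomp Require Import zify ring.
From Stdlib Require Import FunctionalExtensionality.
Import Order.TTheory GRing.Theory.
Set Implicit Arguments. Unset Strict Implicit. Unset Printing Implicit Defensive.

(* All coding matrices are diagonal, so the code splits into N independent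
   scalar (k+2,k) codes, one per row r, whose second parity has coefficients
   x_i(r) = a_i s + b_i t + 1, with signs s, t = +-1 read off binary digits of r.
   The MDS property amounts to the x_i(r) being nonzero and pairwise distinct in i.
   Repair pairs up the rows, each helper sending one combination per pair, i.e.
   N/2 symbols.  For systematic node i the two rows of a pair differ only in the
   digit read by X_i: the other x_l agree on the pair while x_i jumps by 2 a_i,
   so a 2x2 system gives the lost pair.  For the first parity the pairs are
   complementary rows, on which x becomes 2 - x; for the second parity they keep
   only the digit read by X_{k+1}, and then (x - 1)(x' - 1) = b_i^2 - a_i^2 = 1.
   Finally a_i = (u - 1/u)/2, b_i = (u + 1/u)/2 with u = i + 2 in F_p, p a prime
   above (k+2)^2, turn x_i(r) into +-u^(+-1) + 1, which are nonzero and distinct. *)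

(** * Binary digits *)

Definition bitn (r e : nat) : bool := odd (r %/ 2 ^ e).

Lemma bitn_split H (c : bool) L p e : (L < 2 ^ p)%N ->
  bitn (H * 2 ^ p.+1 + c * 2 ^ p + L) e =
  if (e < p)%N then bitn L e else if e == p then c else bitn H (e - p.+1).
Proof.
rewrite /bitn => hL; case: (ltngtP e p) => hep.
- have E1 : (2 ^ p.+1 = 2 ^ (p.+1 - e) * 2 ^ e)%N by rewrite -expnD subnK //; lia.
  have E2 : (2 ^ p = 2 ^ (p - e) * 2 ^ e)%N by rewrite -expnD subnK //; lia.
  rewrite E1 E2 !mulnA -mulnDl divnMDl ?expn_gt0 // !oddD !oddM !oddX.
  have -> : (p.+1 - e == 0)%N = false by lia.
  have -> : (p - e == 0)%N = false by lia.
  by rewrite /= !andbF.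
- have E : (2 ^ e = 2 ^ p.+1 * 2 ^ (e - p.+1))%N by rewrite -expnD subnKC.
  rewrite E divnMA -addnA divnMDl ?expn_gt0 // (divn_small (m := c * 2 ^ p + L)) ?addn0 //.
  by rewrite expnS; case: c; lia.
- subst e; rewrite expnS mulnA -mulnDl divnMDl ?expn_gt0 // divn_small // addn0.
  by rewrite oddD oddM /= andbF oddb.
Qed.

Lemma bitn_compl n y e : (y < 2 ^ n)%N -> (e < n)%N ->
  bitn (2 ^ n - y.+1) e = ~~ bitn y e.
Proof.
rewrite /bitn => hy he; have -> : (2 ^ n - y.+1 = 2 ^ n - 1 - y)%N by lia.
have En : (2 ^ n = 2 ^ (n - e) * 2 ^ e)%N by rewrite -expnD subnK // ltnW.
set P := (2 ^ (n - e))%N; set Q := (2 ^ e)%N.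
have hQ : (0 < Q)%N by rewrite expn_gt0.
have hP : (2 <= P)%N by rewrite /P -{1}(expn1 2) leq_exp2l // subn_gt0.
have Ey := divn_eq y Q; set Y := (y %/ Q)%N in Ey *; set R := (y %% Q)%N in Ey *.
have hR : (R < Q)%N by rewrite ltn_mod.
have hY : (Y < P)%N by rewrite ltn_divLR // -En.
have -> : (2 ^ n - 1 - y = (P - 1 - Y) * Q + (Q - 1 - R))%N.
  rewrite En Ey; have [Z hZ] : exists Z, P = (Y + 1 + Z)%N by exists (P - 1 - Y)%N; lia.
  rewrite -/P -/Q hZ (_ : (Y + 1 + Z - 1 - Y = Z)%N); last by lia.
  rewrite !mulnDl mul1n; lia.
rewrite divnMDl // divn_small ?addn0; last by lia.
rewrite -subnDA oddB; last by lia.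
by rewrite /P oddX oddD /= subn_eq0 leqNgt he /=; case: (odd Y).
Qed.

Definition insbit (c : bool) (p q : nat) : nat :=
  q %/ 2 ^ p * 2 ^ p.+1 + c * 2 ^ p + q %% 2 ^ p.

Lemma bitn_insbit_at c p q : bitn (insbit c p q) p = c.
Proof. by rewrite /insbit bitn_split ?ltn_mod ?expn_gt0 // ltnn eqxx. Qed.

Lemma bitn_insbit_neq c p q e : e != p ->
  bitn (insbit c p q) e = bitn (insbit false p q) e.
Proof. by move=> /negbTE hep; rewrite /insbit !bitn_split ?ltn_mod ?expn_gt0 ?hep. Qed.

Lemma insbit_lt k c p q : (p <= k)%N -> (q < 2 ^ k)%N -> (insbit c p q < 2 ^ k.+1)%N.
Proof.
move=> hp hq; rewrite /insbit.
have Ek : (2 ^ k = 2 ^ (k - p) * 2 ^ p)%N by rewrite -expnD subnK.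
have hH : (q %/ 2 ^ p < 2 ^ (k - p))%N by rewrite ltn_divLR ?expn_gt0 // -Ek.
have hL : (q %% 2 ^ p < 2 ^ p)%N by rewrite ltn_mod expn_gt0.
have : ((q %/ 2 ^ p).+1 * 2 ^ p <= 2 ^ k)%N by rewrite Ek leq_mul2r hH orbT.
by rewrite !expnS mulnCA; case: c; lia.
Qed.

Lemma insbit_cover k p r : (p <= k)%N -> (r < 2 ^ k.+1)%N ->
  exists2 q, (q < 2 ^ k)%N & r = insbit false p q \/ r = insbit true p q.
Proof.
move=> hp hr.
have Ek : (2 ^ k = 2 ^ (k - p) * 2 ^ p)%N by rewrite -expnD subnK.
have hP : (0 < 2 ^ p)%N by rewrite expn_gt0.
set H := (r %/ 2 ^ p.+1)%N; set R := (r %% 2 ^ p.+1)%N.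
have Er : r = (H * 2 ^ p.+1 + R)%N by rewrite /H /R -divn_eq.
have Ek1 : (2 ^ k.+1 = 2 ^ (k - p) * 2 ^ p.+1)%N by rewrite !expnS Ek mulnCA.
have hH : (H < 2 ^ (k - p))%N by rewrite ltn_divLR ?expn_gt0 // -Ek1.
have hR : (R < 2 * 2 ^ p)%N by rewrite -expnS ltn_mod expn_gt0.
have split_q L : (L < 2 ^ p)%N ->
    [/\ (H * 2 ^ p + L) %/ 2 ^ p = H, (H * 2 ^ p + L) %% 2 ^ p = L
      & (H * 2 ^ p + L < 2 ^ k)]%N.
  move=> hL; rewrite divnMDl // divn_small // addn0 modnMDl modn_small //; split=> //.
  have : (H.+1 * 2 ^ p <= 2 ^ k)%N by rewrite Ek leq_mul2r hH orbT.
  by rewrite mulSnr; lia.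
case: (ltnP R (2 ^ p)) => hRp.
  have [qH qL qk] := split_q R hRp; exists (H * 2 ^ p + R)%N => //.
  by left; rewrite /insbit qH qL mul0n addn0.
have [|qH qL qk] := split_q (R - 2 ^ p)%N; first by lia.
exists (H * 2 ^ p + (R - 2 ^ p))%N => //.
by right; rewrite /insbit qH qL mul1n Er; lia.
Qed.

Lemma compl_cover k r : (r < 2 ^ k.+1)%N ->
  exists2 q, (q < 2 ^ k)%N & r = q \/ r = (2 ^ k.+1 - q.+1)%N.
Proof.
move=> hr; case: (ltnP r (2 ^ k)) => h; first by exists r => //; left.
by exists (2 ^ k.+1 - r.+1)%N; move: hr h; rewrite expnS => hr h; [lia | right; lia].
Qed.

Definition flip_high (k q : nat) : nat := ((2 ^ k - (q %/ 2).+1) * 2 + q %% 2)%N.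

Lemma bitn_flip_high0 k q : bitn (flip_high k q) 0 = bitn q 0.
Proof.
rewrite /bitn /flip_high expn0 !divn1 oddD oddM andbF /=.
by rewrite {2}(divn_eq q 2) oddD oddM andbF.
Qed.

Lemma bitn_flip_high k q e : (q < 2 ^ k.+1)%N -> (0 < e <= k)%N ->
  bitn (flip_high k q) e = ~~ bitn q e.
Proof.
case: e => // e hq he; rewrite /bitn /flip_high !expnS !divnMA divnMDl //.
rewrite (divn_small (ltn_mod q 2)) addn0.
by apply: bitn_compl; rewrite // ltn_divLR // -expnSr.
Qed.

Lemma flip_high_lt k q : (flip_high k q < 2 ^ k.+1)%N.
Proof. by rewrite /flip_high expnS; have := expn_gt0 2 k; have := ltn_mod q 2; lia. Qed.

Lemma flip_high_cover k r : (0 < k)%N -> (r < 2 ^ k.+1)%N ->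
  exists2 q, (q < 2 ^ k)%N & r = q \/ r = flip_high k q.
Proof.
move=> hk hr; case: (ltnP r (2 ^ k)) => h; first by exists r => //; left.
have EK : (2 ^ k = 2 * 2 ^ k.-1)%N by rewrite -expnS prednK.
have Er := divn_eq r 2; set Y := (r %/ 2)%N in Er *; set R := (r %% 2)%N in Er *.
have hR : (R < 2)%N by rewrite ltn_mod.
have hY : (Y < 2 ^ k)%N by rewrite ltn_divLR // -expnSr.
exists (flip_high k r); rewrite /flip_high -/Y -/R.
  by move: hr h; rewrite expnS EK; lia.
by right; rewrite divnMDl // divn_small // addn0 modnMDl modn_small //; lia.
Qed.

Local Open Scope ring_scope.

(** * Nodes of the code *)

Section Nodes.
Variable k : nat.

Definition sys_node (l : 'I_k) : 'I_k.+2 := widen_ord (leqW (leqnSn k)) l.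
Definition parity1 : 'I_k.+2 := Ordinal (leqnSn k.+1).
Definition parity2 : 'I_k.+2 := ord_max.

Variant node_spec : 'I_k.+2 -> Prop :=
  | NodeSys l : node_spec (sys_node l)
  | NodeParity1 : node_spec parity1
  | NodeParity2 : node_spec parity2.

Lemma nodeP j : node_spec j.
Proof.
case: (ltnP j k) => [jk | kj].
  by rewrite (_ : j = sys_node (Ordinal jk)); [constructor | apply: val_inj].
move: (ltn_ord j); rewrite ltnS leq_eqVlt ltnS => /orP [/eqP jk1 | jk1].
  by rewrite (_ : j = parity2); [constructor | apply: val_inj].
rewrite (_ : j = parity1); first constructor.
by apply/val_inj/eqP; rewrite /= eqn_leq kj jk1.
Qed.

Lemma sys_node_eq l m : (sys_node l == sys_node m) = (l == m).
Proof. by rewrite -val_eqE. Qed.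
Lemma sys_node_parity1 l : (sys_node l == parity1) = false.
Proof. by apply/negbTE; rewrite -val_eqE /= neq_ltn ltn_ord. Qed.
Lemma sys_node_parity2 l : (sys_node l == parity2) = false.
Proof. by apply/negbTE; rewrite -val_eqE /= neq_ltn ltnS ltnW. Qed.
Lemma parity1_parity2 : (parity1 == parity2) = false.
Proof. by apply/negbTE; rewrite -val_eqE /= neq_ltn ltnSn. Qed.
Lemma parity1_sys_node l : (parity1 == sys_node l) = false.
Proof. by rewrite eq_sym sys_node_parity1. Qed.
Lemma parity2_sys_node l : (parity2 == sys_node l) = false.
Proof. by rewrite eq_sym sys_node_parity2. Qed.
Lemma parity2_parity1 : (parity2 == parity1) = false.
Proof. by rewrite eq_sym parity1_parity2. Qed.

Lemma erased_partner (S : {set 'I_k.+2}) j : #|S| = k -> j \notin S ->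
  exists2 c, c != j & forall i, i != j -> i != c -> i \in S.
Proof.
move=> cardS jS; have jSC : j \in ~: S by rewrite inE.
have /cards1P [c SCj] : #|~: S :\ j| == 1%N.
  by move: (cardsC S) (cardsD1 j (~: S)); rewrite card_ord cardS jSC; lia.
have : c \in ~: S :\ j by rewrite SCj set11.
rewrite !inE => /andP [cj _]; exists c => // i ij ic; apply: contraR ic => iS.
by rewrite -in_set1 -SCj !inE ij.
Qed.

Definition sys_coef (T : Type) (g : 'I_k -> T) (d : T) (j : 'I_k.+2) : T :=
  if insub (val j) is Some i then g i else d.

Lemma sys_coef_sys T (g : 'I_k -> T) d l : sys_coef g d (sys_node l) = g l.
Proof. by rewrite /sys_coef insubT //= => ?; congr g; apply: val_inj. Qed.
Lemma sys_coef_parity1 T (g : 'I_k -> T) d : sys_coef g d parity1 = d.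
Proof. by rewrite /sys_coef insubF //= ltnn. Qed.

Variables (F : fieldType) (n : nat) (A : 'I_k -> 'M[F]_n) (f : 'I_k -> 'cV[F]_n).

Lemma node_content_sys l : node_content A f (sys_node l) = f l.
Proof. by rewrite /node_content insubT //= => ?; congr f; apply: val_inj. Qed.
Lemma node_content_parity1 : node_content A f parity1 = \sum_i f i.
Proof. by rewrite /node_content insubF //= ?eqxx ?ltnn. Qed.
Lemma node_content_parity1E r : node_content A f parity1 r 0 = \sum_i f i r 0.
Proof. by rewrite node_content_parity1 summxE. Qed.

Lemma node_content_parity2 : node_content A f parity2 = \sum_i (A i)^T *m f i.
Proof.
rewrite /node_content insubF /=; last by rewrite ltnNge leqnSn.
by rewrite (_ : (k.+1 == k) = false) //; lia.
Qed.

End Nodes.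
Arguments parity1 {k}.
Arguments parity2 {k}.

(** * Diagonal coding matrices *)

Definition repairable_node (F : fieldType) (k n d : nat) (A : 'I_k -> 'M[F]_n)
    (j : 'I_k.+2) : Prop :=
  exists S : 'I_k.+2 -> 'M[F]_(d, n),
  exists rec : ('I_k.+2 -> 'cV[F]_d) -> 'cV[F]_n,
  forall f, rec (fun l => if l == j then 0 else S l *m node_content A f l)
            = node_content A f j.

Definition row_cover (M n : nat) (r0 r1 : 'I_M -> 'I_n) : Prop :=
  forall r, exists q, r = r0 q \/ r = r1 q.

(* Node [l] sends, for each pair [q] of rows, the combination
   [u l q * c (r0 q) + v l q * c (r1 q)] of its content [c]; [Y0] and [Y1]
   rebuild the two lost rows of pair [q] from these downloads. *)
Lemma repair_by_row_pairs (F : fieldType) k n M (A : 'I_k -> 'M[F]_n) j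
    (r0 r1 : 'I_M -> 'I_n) (u v : 'I_k.+2 -> 'I_M -> F)
    (Y0 Y1 : ('I_k.+2 -> 'I_M -> F) -> 'I_M -> F) :
  row_cover r0 r1 ->
  (forall f D q, (forall l q, D l q = if l == j then 0 else
        u l q * node_content A f l (r0 q) 0 + v l q * node_content A f l (r1 q) 0) ->
     Y0 D q = node_content A f j (r0 q) 0 /\ Y1 D q = node_content A f j (r1 q) 0) ->
  repairable_node M A j.
Proof.
move=> cover rebuild.
pose S l := diag_mx (\row_q u l q) *m rowsub r0 1%:M
          + diag_mx (\row_q v l q) *m rowsub r1 1%:M.
exists S, (fun X => \col_r
  if [pick q | r == r0 q] is Some q then Y0 (fun l q => X l q 0) q
  else if [pick q | r == r1 q] is Some q then Y1 (fun l q => X l q 0) q else 0).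
move=> f; apply/matrixP => r c; rewrite (ord1 c) mxE.
pose D l q := (if l == j then 0 else S l *m node_content A f l) q 0.
have DE l q : D l q = if l == j then 0 else
    u l q * node_content A f l (r0 q) 0 + v l q * node_content A f l (r1 q) 0.
  rewrite /D; case: (l == j); first by rewrite mxE.
  by rewrite mulmxDl -!mulmxA -!rowsubE !mul_diag_mx !mxE.
case: pickP => [q /eqP -> | nr0]; first exact: (rebuild f D q DE).1.
case: pickP => [q /eqP -> | nr1]; first exact: (rebuild f D q DE).2.
by case: (cover r) => q [] /eqP; rewrite ?nr0 ?nr1.
Qed.

Lemma erasure_row_eq0 (F : fieldType) k (S : {set 'I_k.+2}) (y d : 'I_k -> F) :
  #|S| = k -> (forall i, y i != 0) -> injective y ->
  (forall m, sys_node m \in S -> d m = 0) ->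
  (parity1 \in S -> \sum_m d m = 0) ->
  (parity2 \in S -> \sum_m y m * d m = 0) ->
  forall l, d l = 0.
Proof.
move=> cardS y0 y_inj dS sum1 sum2 l.
have [lS | lS] := boolP (sys_node l \in S); first exact: dS.
have [c cl keep] := erased_partner cardS lS.
have d_other m : m != l -> sys_node m != c -> d m = 0.
  by move=> ml mc; apply/dS/keep; rewrite ?sys_node_eq.
case: (nodeP c) cl keep d_other => [m | |] cl keep d_other.
- have ml : m != l by rewrite -sys_node_eq.
  have sum_lm (G : 'I_k -> F) : (forall i, d i = 0 -> G i = 0) -> \sum_i G i = G l + G m.
    move=> G0; rewrite (bigD1 l) //= (bigD1 m) ?ml //= big1 ?addr0 // => i /andP [il im].
    by apply/G0/d_other; rewrite ?sys_node_eq.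
  have /sum1 : parity1 \in S by apply: keep; rewrite eq_sym ?sys_node_parity1.
  rewrite sum_lm // => /eqP; rewrite addr_eq0 => /eqP dm.
  have /sum2 : parity2 \in S by apply: keep; rewrite eq_sym ?sys_node_parity2.
  rewrite sum_lm => [|i ->]; last by rewrite mulr0.
  move/eqP; rewrite dm mulrN -mulNr -mulrDl mulf_eq0 addrC subr_eq0 (inj_eq y_inj).
  by rewrite (negbTE ml) => /eqP ->; rewrite oppr0.
- have /sum2 : parity2 \in S by apply: keep; rewrite eq_sym ?sys_node_parity2 ?parity1_parity2.
  rewrite (bigD1 l) //= big1 => [|i il]; last by rewrite d_other ?sys_node_parity1 ?mulr0.
  by rewrite addr0 => /eqP; rewrite mulf_eq0 (negbTE (y0 l)) => /eqP.
- have /sum1 : parity1 \in S.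
    by apply: keep; rewrite ?parity1_parity2 // eq_sym sys_node_parity1.
  rewrite (bigD1 l) //= big1 => [|i il]; last by rewrite d_other ?sys_node_parity2.
  by rewrite addr0.
Qed.

Section DiagonalCode.
Variables (F : fieldType) (k n : nat) (x : 'I_k -> 'I_n -> F).

Definition diag_code (i : 'I_k) : 'M[F]_n := diag_mx (\row_r x i r).

Lemma node_content_parity2E f r :
  node_content diag_code f parity2 r 0 = \sum_l x l r * f l r 0.
Proof.
rewrite node_content_parity2 summxE; apply: eq_bigr => l _.
by rewrite tr_diag_mx mul_diag_mx !mxE.
Qed.

Lemma diag_code_MDS :
  (forall i r, x i r != 0) -> (forall r, injective (x ^~ r)) -> is_MDS diag_code.
Proof.
move=> x0 x_inj S cardS f g fg; apply: functional_extensionality => l.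
apply/matrixP => r c; rewrite (ord1 c); apply/eqP; rewrite -subr_eq0; apply/eqP.
apply: (erasure_row_eq0 (y := x ^~ r) (d := fun m => f m r 0 - g m r 0) cardS) => //.
- by move=> m /fg; rewrite !node_content_sys => ->; rewrite subrr.
- move=> /fg /(congr1 (fun M : 'cV_n => M r 0)).
  by rewrite !node_content_parity1E sumrB => ->; rewrite subrr.
- move=> /fg /(congr1 (fun M : 'cV_n => M r 0)).
  rewrite !node_content_parity2E => e /=.
  by under eq_bigr do rewrite mulrBr; rewrite sumrB e subrr.
Qed.

Lemma diag_code_repair_sys i M (r0 r1 : 'I_M -> 'I_n) :
  row_cover r0 r1 ->
  (forall l q, l != i -> x l (r0 q) = x l (r1 q)) ->
  (forall q, x i (r0 q) != x i (r1 q)) ->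
  repairable_node M diag_code (sys_node i).
Proof.
move=> cover x_eq x_neq.
pose T (D : 'I_k.+2 -> 'I_M -> F) q := D parity1 q - \sum_(l < k) D (sys_node l) q.
pose W (D : 'I_k.+2 -> 'I_M -> F) q :=
  D parity2 q - \sum_(l < k) x l (r0 q) * D (sys_node l) q.
apply: (repair_by_row_pairs (u := fun _ _ => 1) (v := fun _ _ => 1)
  (Y0 := fun D q => (W D q - x i (r1 q) * T D q) / (x i (r0 q) - x i (r1 q)))
  (Y1 := fun D q => (x i (r0 q) * T D q - W D q) / (x i (r0 q) - x i (r1 q))) cover).
move=> f D q DE.
have ET : T D q = f i (r0 q) 0 + f i (r1 q) 0.
  rewrite /T DE parity1_sys_node !mul1r !node_content_parity1E -big_split -sumrB.
  rewrite (bigD1 i) //= DE eqxx subr0 big1 ?addr0 // => l li.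
  by rewrite DE sys_node_eq (negbTE li) !node_content_sys !mul1r subrr.
have EW : W D q = x i (r0 q) * f i (r0 q) 0 + x i (r1 q) * f i (r1 q) 0.
  rewrite /W DE parity2_sys_node !mul1r !node_content_parity2E -big_split -sumrB.
  rewrite (bigD1 i) //= DE eqxx mulr0 subr0 big1 ?addr0 // => l li.
  rewrite DE sys_node_eq (negbTE li) !node_content_sys !mul1r -(x_eq l q li).
  by rewrite mulrDr subrr.
have x_sub : x i (r0 q) - x i (r1 q) != 0 by rewrite subr_eq0.
by rewrite /= ET EW !node_content_sys; split; field.
Qed.

Lemma diag_code_repair_parity1 M (r0 r1 : 'I_M -> 'I_n) :
  (2 : F) != 0 -> row_cover r0 r1 ->
  (forall l q, x l (r1 q) = 2 - x l (r0 q)) ->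
  repairable_node M diag_code parity1.
Proof.
move=> two0 cover x_flip.
apply: (repair_by_row_pairs (u := fun _ _ => 1)
  (v := fun l _ => if l == parity2 then 1 else -1)
  (Y0 := fun D q => D parity2 q / 2 + \sum_(l < k) (1 - x l (r0 q) / 2) * D (sys_node l) q)
  (Y1 := fun D q => D parity2 q / 2 - \sum_(l < k) x l (r0 q) / 2 * D (sys_node l) q)
  cover).
move=> f D q DE.
have Ep2 : D parity2 q = \sum_l (x l (r0 q) * f l (r0 q) 0 + x l (r1 q) * f l (r1 q) 0).
  by rewrite DE parity2_parity1 eqxx !mul1r !node_content_parity2E -big_split.
have Esys l : D (sys_node l) q = f l (r0 q) 0 - f l (r1 q) 0.
  by rewrite DE sys_node_parity1 sys_node_parity2 !node_content_sys mul1r mulN1r.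
rewrite !node_content_parity1E Ep2 mulr_suml; split.
  by rewrite -big_split; apply: eq_bigr => l _ /=; rewrite Esys x_flip; field.
by rewrite -sumrB; apply: eq_bigr => l _ /=; rewrite Esys x_flip; field.
Qed.

Lemma diag_code_repair_parity2 M (r0 r1 : 'I_M -> 'I_n) :
  (forall l r, x l r != 0) -> row_cover r0 r1 ->
  (forall l q, (x l (r0 q) - 1) * (x l (r1 q) - 1) = 1) ->
  repairable_node M diag_code parity2.
Proof.
move=> x0 cover x_rel.
apply: (repair_by_row_pairs
  (u := fun l q => sys_coef (fun m => x m (r0 q)) 1 l)
  (v := fun l q => sys_coef (fun m => - x m (r1 q)) 1 l)
  (Y0 := fun D q => D parity1 q + \sum_(l < k) (1 - (x l (r0 q))^-1) * D (sys_node l) q)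
  (Y1 := fun D q => D parity1 q - \sum_(l < k) (x l (r0 q))^-1 * D (sys_node l) q)
  cover).
move=> f D q DE.
have Ep1 : D parity1 q = \sum_l (f l (r0 q) 0 + f l (r1 q) 0).
  by rewrite DE parity1_parity2 !sys_coef_parity1 !mul1r !node_content_parity1E -big_split.
have Esys l : D (sys_node l) q = x l (r0 q) * f l (r0 q) 0 - x l (r1 q) * f l (r1 q) 0.
  by rewrite DE sys_node_parity2 !sys_coef_sys !node_content_sys mulNr.
have x01 l : x l (r0 q) - 1 != 0.
  by apply: contra_eq_neq (x_rel l q) => ->; rewrite mul0r eq_sym oner_neq0.
have x1E l : x l (r1 q) = 1 + (x l (r0 q) - 1)^-1.
  have /(congr1 (fun t => (x l (r0 q) - 1)^-1 * t)) := x_rel l q.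
  by rewrite mulKf // mulr1 => <-; rewrite addrC subrK.
rewrite !node_content_parity2E Ep1; split.
  rewrite -big_split; apply: eq_bigr => l _ /=; rewrite Esys x1E; field.
  by rewrite x0 x01.
rewrite -sumrB; apply: eq_bigr => l _ /=; rewrite Esys x1E; field.
by rewrite x0 x01.
Qed.

End DiagonalCode.

(** * The coding matrices A_i *)

Section Code.
Variables (F : fieldType) (k : nat) (a b : 'I_k -> F).

(* The r-th diagonal entry of A_i (recall that i : 'I_k stands for i+1): X_i reads
   binary digit k - i of r, and X_{k+1} digit 0. *)
Definition code_coef (i : 'I_k) (r : nat) : F :=
  a i * (-1) ^+ bitn r (k - i) + b i * (-1) ^+ bitn r 0 + 1.

Lemma Acode_diag :
  Acode a b = diag_code (fun i (r : 'I_(Nlen k)) => code_coef i r).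
Proof.
apply: functional_extensionality => i; apply/matrixP => r s.
have div_i : (Nlen k %/ 2 ^ i.+1 = 2 ^ (k - i))%N.
  by rewrite /Nlen -expnB ?subSS // ltnS ltnW.
have div_k : (Nlen k %/ 2 ^ k.+1 = 2 ^ 0)%N by rewrite divnn expn_gt0.
rewrite /Acode /Xmat /diag_code /code_coef !mxE div_i div_k.
by case: (r == s); rewrite /bitn ?mulr1n ?mulr0n ?mulr0 ?addr0 //; do 2 case: odd.
Qed.

Definition row_low (q : 'I_(2 ^ k)) : 'I_(Nlen k) :=
  widen_ord (@leq_pexp2l 2 _ _ isT (leqnSn k)) q.
Definition row_ins (i : 'I_k) (c : bool) (q : 'I_(2 ^ k)) : 'I_(Nlen k) :=
  Ordinal (insbit_lt c (leq_subr i k) (ltn_ord q)).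
Definition row_flip_high (q : 'I_(2 ^ k)) : 'I_(Nlen k) :=
  Ordinal (flip_high_lt k q).

Lemma row_ins_cover i : row_cover (row_ins i false) (row_ins i true).
Proof.
move=> r; have [q qk [rq | rq]] := insbit_cover (leq_subr i k) (ltn_ord r).
  by exists (Ordinal qk); left; apply: val_inj.
by exists (Ordinal qk); right; apply: val_inj.
Qed.

Lemma row_compl_cover : row_cover row_low (fun q => rev_ord (row_low q)).
Proof.
move=> r; have [q qk [rq | rq]] := compl_cover (ltn_ord r).
  by exists (Ordinal qk); left; apply: val_inj.
by exists (Ordinal qk); right; apply: val_inj.
Qed.

Lemma row_flip_high_cover : (0 < k)%N -> row_cover row_low row_flip_high.
Proof.
move=> k_gt0 r; have [q qk [rq | rq]] := flip_high_cover k_gt0 (ltn_ord r).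
  by exists (Ordinal qk); left; apply: val_inj.
by exists (Ordinal qk); right; apply: val_inj.
Qed.

Lemma code_coef_ins_other i l q : l != i ->
  code_coef l (row_ins i false q) = code_coef l (row_ins i true q).
Proof.
move=> li; have ki : (k - i != 0)%N by rewrite subn_eq0 -ltnNge.
have kl : (k - l != k - i)%N.
  by move: li; rewrite -val_eqE /=; have := ltn_ord l; have := ltn_ord i; lia.
by rewrite /code_coef /= !(@bitn_insbit_neq true) // eq_sym.
Qed.

Lemma code_coef_ins_sub i q :
  code_coef i (row_ins i false q) - code_coef i (row_ins i true q) = 2 * a i.
Proof.
have ki : (0 != k - i)%N by rewrite eq_sym subn_eq0 -ltnNge.
rewrite /code_coef /= !bitn_insbit_at (@bitn_insbit_neq true) //=.
by rewrite expr0 expr1; ring.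
Qed.

Lemma code_coef_compl l q :
  code_coef l (rev_ord (row_low q)) = 2 - code_coef l (row_low q).
Proof.
have qk1 : (q < 2 ^ k.+1)%N := ltn_ord (row_low q).
by rewrite /code_coef /= !bitn_compl ?ltnS ?leq_subr // !signrN; ring.
Qed.

Lemma code_coef_flip_high l q : (a l ^+ 2 - b l ^+ 2 = -1) ->
  (code_coef l (row_low q) - 1) * (code_coef l (row_flip_high q) - 1) = 1.
Proof.
move=> ab; have qk1 : (q < 2 ^ k.+1)%N := ltn_ord (row_low q).
have kl : (0 < k - l <= k)%N by rewrite subn_gt0 ltn_ord leq_subr.
rewrite /code_coef /= bitn_flip_high0 bitn_flip_high // signrN !addrK.
transitivity (b l ^+ 2 * ((-1) ^+ bitn q 0) ^+ 2 - a l ^+ 2 * ((-1) ^+ bitn q (k - l)) ^+ 2).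
  by ring.
by rewrite !sqrr_sign !mulr1 -opprB ab opprK.
Qed.

End Code.

Lemma Acode_MDS (F : fieldType) k (a b : 'I_k -> F) :
  (forall i r, code_coef a b i r != 0) -> (forall r, injective (code_coef a b ^~ r)) ->
  is_MDS (Acode a b).
Proof. by move=> x0 x_inj; rewrite Acode_diag; apply: diag_code_MDS. Qed.

Lemma Acode_repairable (F : fieldType) k (a b : 'I_k -> F) : (0 < k)%N ->
  (2 : F) != 0 -> (forall i, a i != 0) -> (forall i, a i ^+ 2 - b i ^+ 2 = -1) ->
  (forall i r, code_coef a b i r != 0) ->
  repairable_with (2 ^ k) (Acode a b).
Proof.
move=> k_gt0 two0 a0 ab x0; rewrite Acode_diag => j; case: (nodeP j) => [i||].
- apply: diag_code_repair_sys (row_ins_cover i) _ _ => [l q li | q].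
    exact: code_coef_ins_other.
  by rewrite -subr_eq0 code_coef_ins_sub mulf_neq0.
- apply: diag_code_repair_parity1 two0 (@row_compl_cover _) _ => l q.
  by rewrite code_coef_compl.
- apply: diag_code_repair_parity2 x0 (row_flip_high_cover k_gt0) _ => l q.
  exact: code_coef_flip_high.
Qed.

(** * Explicit constants *)

Section Constants.
Variables (F : fieldType) (k : nat).
Hypothesis natr_inj : forall m n, (m <= (k + 2) ^ 2)%N -> (n <= (k + 2) ^ 2)%N ->
  (m%:R == n%:R :> F) = (m == n).

Definition uconst (i : 'I_k) : F := (i + 2)%:R.
Definition aconst (i : 'I_k) : F := (uconst i - (uconst i)^-1) / 2.
Definition bconst (i : 'I_k) : F := (uconst i + (uconst i)^-1) / 2.

Let natr_neq m n : (m <= (k + 2) ^ 2)%N -> (n <= (k + 2) ^ 2)%N -> m != n ->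
  m%:R != n%:R :> F.
Proof. by move=> mk nk; rewrite natr_inj. Qed.

Lemma two_neq0 : (2 : F) != 0.
Proof. by have := @natr_neq 2 0; rewrite mulr0n; apply; lia. Qed.

Lemma uconst_neq0 i : uconst i != 0.
Proof. by have := @natr_neq (i + 2) 0; rewrite mulr0n; apply; have := ltn_ord i; lia. Qed.

Lemma uconst_mul_neq1 i j : uconst i * uconst j != 1.
Proof.
have := @natr_neq ((i + 2) * (j + 2)) 1; rewrite mulr1n natrM; apply.
all: by have := ltn_ord i; have := ltn_ord j; nia.
Qed.

Lemma uconst_inj : injective uconst.
Proof.
move=> i j /eqP; rewrite natr_inj => [/eqP ij||]; first by apply: ord_inj; lia.
all: by have := ltn_ord i; have := ltn_ord j; nia.
Qed.

Lemma aconst_neq0 i : aconst i != 0.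
Proof.
rewrite mulf_eq0 invr_eq0 (negbTE two_neq0) orbF subr_eq0.
apply: contra (uconst_mul_neq1 i i) => /eqP {2}->.
by rewrite mulfV ?uconst_neq0.
Qed.

Lemma aconst_bconst i : aconst i ^+ 2 - bconst i ^+ 2 = -1.
Proof.
rewrite /aconst /bconst; move: (uconst i) (uconst_neq0 i) => u u0.
by field; rewrite two_neq0 u0.
Qed.

Let uconst_pm (i : 'I_k) (r : nat) : F :=
  if bitn r (k - i) == bitn r 0 then uconst i else (uconst i)^-1.

Lemma code_coef_const i r :
  code_coef aconst bconst i r = (-1) ^+ bitn r 0 * uconst_pm i r + 1.
Proof.
rewrite /code_coef /uconst_pm /aconst /bconst; move: (uconst i) (uconst_neq0 i) => u u0.
by do 2 case: bitn; rewrite /= ?expr0 ?expr1; field; rewrite two_neq0 ?u0.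
Qed.

Lemma uconst_pm_sqr_neq1 i r : uconst_pm i r * uconst_pm i r != 1.
Proof.
rewrite /uconst_pm; case: ifP => _; first exact: uconst_mul_neq1.
by rewrite -invfM invr_eq1 uconst_mul_neq1.
Qed.

Lemma const_code_coef_neq0 i r : code_coef aconst bconst i r != 0.
Proof.
rewrite code_coef_const addr_eq0; apply: contra (uconst_pm_sqr_neq1 i r) => /eqP u_sign.
rewrite -(signrMK (bitn r 0) (uconst_pm i r)) u_sign mulrN1 mulrN mulNr opprK.
by rewrite -expr2 sqrr_sign.
Qed.

Lemma const_code_coef_inj r : injective (code_coef aconst bconst ^~ r).
Proof.
move=> i j /=; rewrite !code_coef_const => /addIr /(can_inj (signrMK _)).
rewrite /uconst_pm; case: ifP => _; case: ifP => _ uij; first exact: uconst_inj.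
- by move/eqP: (uconst_mul_neq1 i j); rewrite uij mulVf ?uconst_neq0.
- by move/eqP: (uconst_mul_neq1 i j); rewrite -uij mulfV ?uconst_neq0.
- exact/uconst_inj/invr_inj.
Qed.

End Constants.

Lemma Fp_natr_eq p m n : prime p -> (m < p)%N -> (n < p)%N ->
  (m%:R == n%:R :> 'F_p) = (m == n).
Proof. by move=> p_pr mp np; rewrite -val_eqE /= !val_Fp_nat // !modn_small. Qed.

Theorem theorem1 (k : nat) : (1 <= k)%N ->
  exists F : finFieldType,
  (2 * k + 3 <= #|F|)%N /\
  exists a b : 'I_k -> F,
    (forall i, a i ^+ 2 - b i ^+ 2 = -1) /\
    is_MDS (Acode a b) /\
    repairable_with (2 ^ k) (Acode a b).
Proof.
move=> k_gt0; have [p p_big p_pr] := prime_above ((k + 2) ^ 2).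
have natr_inj m n : (m <= (k + 2) ^ 2)%N -> (n <= (k + 2) ^ 2)%N ->
    (m%:R == n%:R :> 'F_p) = (m == n).
  by move=> mk nk; apply: Fp_natr_eq; lia.
exists 'F_p; split; first by rewrite card_Fp //; nia.
exists (@aconst 'F_p k), (@bconst 'F_p k); split; first exact: aconst_bconst.
split; first exact: Acode_MDS (const_code_coef_neq0 natr_inj) (const_code_coef_inj natr_inj).
apply: Acode_repairable => //.
- exact: two_neq0 natr_inj.
- exact: aconst_neq0 natr_inj.
- exact: aconst_bconst natr_inj.
- exact: const_code_coef_neq0 natr_inj.
Qed.
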